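(* Let $(X,d)$ be a compact metric space, $f_{1,\infty}=(f_n)_{n=1}^\infty$ a sequence of continuous maps $f_n:X\to X$, and $(p_k)_{k=1}^\infty$ a sequence of positive integers. Let $(A_i)_{i=0}^\infty$ and $(B_i)_{i=0}^\infty$ be decreasing sequences of compact subsets of $X$ with $\bigcap_{i=0}^\infty A_i=\{a\}$ and $\bigcap_{i=0}^\infty B_i=\{b\}$, where $a\neq b$. Suppose that for every choice $c=(C_k)_k$ with $C_k\in\{A_k,B_k\}$ for each $k$, there exists $x_c\in X$ such that $f_1^{p_k}(x_c)\in C_k$ for all $k\ge 1$. Then $f_{1,\infty}$ is Li-Yorke chaotic.
   Context: For $n\in\mathbb{N}$, $f_1^n=f_n\circ\cdots\circ f_1$. The system $f_{1,\infty}$ is Li-Yorke chaotic if there is an uncountable set $S\subseteq X$ such that for all distinct $x,y\in S$: $\liminf_{n\to\infty}d(f_1^n(x),f_1^n(y))=0$ and $\limsup_{n\to\infty}d(f_1^n(x),f_1^n(y))>0$. *)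

From HB Require Import structures.
From mathcomp Require Import all_boot all_order all_algebra.
From mathcomp Require Import all_classical all_reals all_analysis.
Set Implicit Arguments. Unset Strict Implicit. Unset Printing Implicit Defensive.
Import Order.TTheory GRing.Theory Num.Theory.
Local Open Scope classical_set_scope.
Local Open Scope ring_scope.

(* Non-autonomous iterates: f is indexed from 1 (f 0 is never used);
   comp_iter f n = f_1^n = f n \o ... \o f 1, comp_iter f 0 = id. *)
Fixpoint comp_iter (X : Type) (f : nat -> X -> X) (n : nat) : X -> X :=
  match n with
  | 0 => id
  | m.+1 => fun x => f m.+1 (comp_iter f m x)
  end.

Definition LiYorke_chaotic (R : realType) (X : metricType R)
    (f : nat -> X -> X) : Prop :=
  exists S : set X, ~ countable S /\
    forall x y, S x -> S y -> x <> y ->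
      limn_einf (fun n => (mdist (comp_iter f n x) (comp_iter f n y))%:E) = 0%E /\
      (0 < limn_esup (fun n => (mdist (comp_iter f n x) (comp_iter f n y))%:E))%E.

From HB Require Import structures.
From mathcomp Require Import all_boot all_order all_algebra.
From mathcomp Require Import all_classical all_reals all_analysis.
From mathcomp Require Import lra.
Import Order.TTheory GRing.Theory Num.Theory.
Local Open Scope classical_set_scope.
Local Open Scope ring_scope.

(* Encode a bit sequence s as the itinerary [code s], which prescribes A_k at
   every odd k and copies the bit s n at every k of 2-adic valuation n+1, and
   let x_s follow it.  By compactness A_k and B_k eventually lie in any ball
   around a, resp. b.  Moreover p_k -> oo: if p_k = M for infinitely many k, a
   point following an itinerary that alternates between A and B along those k
   is mapped by f_1^M into both intersections, forcing a = b.  Along odd k the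
   orbits of x_s and x_t are both near a, so the liminf of their distance is 0;
   if s n <> t n, along the k of valuation n+1 one orbit is near a and the other
   near b, so the limsup is at least d(a,b)/3.  Hence s |-> x_s is injective and
   its range is an uncountable scrambled set by Cantor's diagonal argument. *)

Lemma subset_nonincreasing {T : Type} {A : nat -> set T} :
  (forall i, A i.+1 `<=` A i) -> forall {i j : nat}, (i <= j)%N -> A j `<=` A i.
Proof.
move=> dA i j ij; apply/subsetPset; move: i j ij; apply/nonincreasing_seqP => n.
exact/subsetPset.
Qed.

Lemma near_subset_nbhs_bigcap (T : topologicalType) (A : nat -> set T) (U : set T) :
  compact [set: T] -> (forall i, closed (A i)) -> (forall i, A i.+1 `<=` A i) ->
  (forall x, (\bigcap_i A i) x -> nbhs x U) ->
  \forall i \near \oo, A i `<=` U.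
Proof.
move=> cT clA dA nbhsU; apply: contrapT => notU.
have outU N : exists x, A N x /\ ~ U x.
  apply: contrapT => /forallNP noout; apply: notU; exists N => // i /= Ni x Aix.
  apply: contrapT => nUx; apply: (noout x).
  by split=> //; exact: (subset_nonincreasing dA Ni) Aix.
have [y yP] := choice outU.
have [z [_ yz]] := cT (y @ \oo) _ filterT.
have capz : (\bigcap_i A i) z.
  move=> i _; have /closure_id -> := clA i; move: (yz); rewrite clusterE; apply.
  by exists i => // n /= ni; exact: (subset_nonincreasing dA ni) (yP n).1.
have yU : (y @ \oo) (~` U) by exists 0%N => // n _; exact: (yP n).2.
by have [w [/= nUw Uw]] := yz _ _ yU (nbhsU z capz).
Qed.

Lemma near_subset_ball_bigcap {R : numFieldType} {T : pseudoMetricType R}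
    (A : nat -> set T) (c : T) :
  compact [set: T] -> (forall i, closed (A i)) -> (forall i, A i.+1 `<=` A i) ->
  \bigcap_i A i = [set c] ->
  forall e, 0 < e -> \forall i \near \oo, A i `<=` ball c e.
Proof.
move=> cT clA dA capA e e0; apply: near_subset_nbhs_bigcap => // x.
by rewrite capA => ->; exact: nbhsx_ballx.
Qed.

Lemma exists_count_parity {P : pred nat} :
  (forall K, exists2 k, (K <= k)%N & P k) ->
  forall K (b : bool), exists k, [/\ (K <= k)%N, P k & odd (count P (iota 0 k)) = b].
Proof.
move=> Pfreq K b; have [k1 Kk1 Pk1] := Pfreq K.
have exP : exists k, (k1 < k)%N && P k.
  by have [k k1k Pk] := Pfreq k1.+1; exists k; rewrite k1k.
have [k2 /andP [k12 Pk2] mink2] := ex_minnP exP.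
have gap : count P (iota k1.+1 (k2 - k1.+1)) = 0%N.
  apply/eqP; rewrite -leqn0 leqNgt -has_count; apply/hasPn => m.
  rewrite mem_iota subnKC // => /andP [k1m mk2]; apply/negP => Pm.
  by have := mink2 m; rewrite k1m Pm leqNgt mk2 => /(_ isT).
have count_k2 : count P (iota 0 k2) = (count P (iota 0 k1)).+1.
  rewrite -(subnKC k12) iotaD count_cat gap addn0 -addn1 iotaD count_cat /= Pk1.
  by rewrite addn0 addn1.
have [<-|parity_k1] := eqVneq (odd (count P (iota 0 k1))) b; first by exists k1.
exists k2; split => //; first exact: leq_trans Kk1 (ltnW k12).
by rewrite count_k2 /=; move: parity_k1; case: odd; case: b.
Qed.

Definition follows_itinerary {T : Type} (F : nat -> T -> T) (p : nat -> nat)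
    (A B : nat -> set T) (c : nat -> bool) (x : T) :=
  forall k, (0 < k)%N -> (if c k then A k else B k) (F (p k) x).

Lemma itinerary_times_unbounded {T : Type} (F : nat -> T -> T) (p : nat -> nat)
    (A B : nat -> set T) :
  (forall i, A i.+1 `<=` A i) -> (forall i, B i.+1 `<=` B i) ->
  \bigcap_i A i `&` \bigcap_i B i = set0 ->
  (forall c, exists x, follows_itinerary F p A B c x) ->
  forall M, \forall k \near \oo, (M <= p k)%N.
Proof.
move=> dA dB disjAB HC; elim=> [|M IH]; first exact: nearW.
suff neM : \forall k \near \oo, p k != M.
  by apply: filterS2 neM IH => k; rewrite ltn_neqAle eq_sym => -> ->.
apply: contrapT => notneM; pose P k := (0 < k)%N && (p k == M).
have Pfreq K : exists2 k, (K <= k)%N & P k.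
  apply: contrapT => noP; apply: notneM; exists K.+1 => // k /= Kk.
  apply/negP => /eqP pkM; apply: noP; exists k; first exact: ltnW.
  by rewrite /P pkM eqxx (leq_ltn_trans (leq0n K) Kk).
have [z zc] := HC (fun k => odd (count P (iota 0 k))).
have hit (b : bool) i : (if b then A i else B i) (F M z).
  have [k [ik /andP [k0 /eqP pkM] ck]] := exists_count_parity Pfreq i b.
  have := zc k k0; rewrite /= ck pkM.
  case: b {ck} => Fz.
  - exact: (subset_nonincreasing dA ik) Fz.
  - exact: (subset_nonincreasing dB ik) Fz.
have : (\bigcap_i A i `&` \bigcap_i B i) (F M z).
  by split=> i _; [exact: (hit true) | exact: (hit false)].
by rewrite disjAB.
Qed.

Lemma near_logn2 (P : set nat) n : (\forall k \near \oo, P k) ->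
  exists2 k, P k & logn 2 k = n.
Proof.
move=> [K _ PK]; exists (2 ^ n * K.*2.+1)%N.
  apply: PK; apply: leq_trans (leq_pmull _ (expn_gt0 2 n)).
  by rewrite -addnn (leq_trans (leq_addr K K)).
rewrite lognM ?expn_gt0 // pfactorK // logn_coprime ?addn0 //.
by rewrite coprime2n /= odd_double.
Qed.

Definition code (s : nat -> bool) (k : nat) : bool :=
  if logn 2 k is n.+1 then s n else true.

Section limn_einf_esup_frequently.
Context {R : realType}.
Implicit Types (u : nat -> R).

Lemma limn_einf_eq0 u : (forall n, 0 <= u n) ->
  (forall e, 0 < e -> forall N, exists2 n, (N <= n)%N & u n <= e) ->
  limn_einf (fun n => (u n)%:E) = 0%E.
Proof.
move=> u_ge0 u_small; rewrite limn_einf_lim.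
suff -> : einfs (fun n => (u n)%:E) = cst 0%E by rewrite lim_cst.
apply/funext => N; apply/eqP; rewrite eq_le; apply/andP; split; last first.
  by apply: le_ereal_inf_tmp => _ [n _ <-]; rewrite lee_fin.
apply/lee_addgt0Pr => e e0; rewrite add0e.
have [n Nn une] := u_small e e0 N.
by apply: le_trans (ereal_inf_lbound _) _; [exists n |].
Qed.

Lemma limn_esup_ge u d : (forall N, exists2 n, (N <= n)%N & d <= u n) ->
  (d%:E <= limn_esup (fun n => (u n)%:E))%E.
Proof.
move=> u_big; rewrite limn_esup_lim; apply: lime_ge; first exact: is_cvg_esups.
apply: nearW => N; have [n Nn dun] := u_big N.
have drop_n : sdrop (fun n => (u n)%:E) N (u n)%:E by exists n.
by apply: le_trans (ereal_sup_ubound drop_n); rewrite lee_fin.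
Qed.

End limn_einf_esup_frequently.

Lemma not_countable_bool_seq : ~ countable [set: nat -> bool].
Proof.
move/pcard_surjP => [g /= gsurj]; pose diag n := ~~ g n n.
have [n _ gn] := gsurj diag I.
by have := congr1 (fun s => s n) gn; rewrite /diag; case: (g n n).
Qed.

Lemma not_countable_range_bool_seq {T : Type} (h : (nat -> bool) -> T) :
  injective h -> ~ countable (range h).
Proof.
move=> hinj /countable_injP [j jinj]; apply: not_countable_bool_seq.
apply/countable_injP; exists (j \o h) => s t _ _ /jinj.
by rewrite !inE => /(_ (imageT _ _) (imageT _ _)) /hinj.
Qed.

Section LiYorke_pairs.
Context {R : realType} {X : metricType R}.

Definition LiYorke_pair (g : nat -> X -> X) (x y : X) :=
  limn_einf (fun n => (mdist (g n x) (g n y))%:E) = 0%E /\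
  (0 < limn_esup (fun n => (mdist (g n x) (g n y))%:E))%E.

Lemma LiYorke_pair_neq g x y : LiYorke_pair g x y -> x <> y.
Proof.
move=> [_ +] eq_xy; rewrite eq_xy.
under eq_fun do rewrite mdistxx.
rewrite is_cvg_limn_esupE; first by rewrite lim_cst // ltxx.
exact: is_cvg_cst.
Qed.

Lemma LiYorke_chaotic_bool_seq (f : nat -> X -> X) (xs : (nat -> bool) -> X) :
  (forall s t, s <> t -> LiYorke_pair (comp_iter f) (xs s) (xs t)) ->
  LiYorke_chaotic f.
Proof.
move=> pairs; have xs_inj : injective xs.
  by move=> s t eq_st; apply: contrapT => /pairs /LiYorke_pair_neq.
exists (range xs); split; first exact: not_countable_range_bool_seq.
move=> _ _ [s _ <-] [t _ <-] neq_xy; apply: pairs => eq_st.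
by apply: neq_xy; rewrite eq_st.
Qed.

End LiYorke_pairs.

Section coded_orbits.
Context {R : realType} {X : metricType R}.
Variables (g : nat -> X -> X) (p : nat -> nat) (A B : nat -> set X) (a b : X).
Variable xs : (nat -> bool) -> X.
Hypothesis p_unbounded : forall M, \forall k \near \oo, (M <= p k)%N.
Hypothesis A_shrinks : forall e, 0 < e -> \forall i \near \oo, A i `<=` ball a e.
Hypothesis B_shrinks : forall e, 0 < e -> \forall i \near \oo, B i `<=` ball b e.
Hypothesis xs_follows : forall s, follows_itinerary g p A B (code s) (xs s).

Lemma coded_orbits_liminf s t :
  limn_einf (fun n => (mdist (g n (xs s)) (g n (xs t)))%:E) = 0%E.
Proof.
apply: limn_einf_eq0 => [n|e e0 N]; first exact: mdist_ge0.
have e20 : 0 < e / 2 by rewrite divr_gt0.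
have [k [k0 Nk Ak] lk] : exists2 k,
    [/\ (0 < k)%N, (N <= p k)%N & A k `<=` ball a (e / 2)] & logn 2 k = 0%N.
  by apply: near_logn2; near=> k; split; near: k;
    [|exact: p_unbounded|exact: A_shrinks].
exists (p k) => //; have := xs_follows s _ k0; have := xs_follows t _ k0.
rewrite /code lk => /Ak + /Ak; rewrite !ballEmdist /= => near_t near_s.
have := metric_triangle (g (p k) (xs s)) a (g (p k) (xs t)).
rewrite [mdist _ a]metric_sym; lra.
Unshelve. all: by end_near.
Qed.

Hypothesis neq_ab : a <> b.

Lemma coded_orbits_limsup s t : s <> t ->
  (0 < limn_esup (fun n => (mdist (g n (xs s)) (g n (xs t)))%:E))%E.
Proof.
move=> neq_st; have [n0 sn0] : exists n0, s n0 != t n0.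
  apply: contrapT => /forallNP eq_st; apply/neq_st/funext => n.
  by apply: contrapT => /eqP; exact: eq_st.
pose d := mdist a b / 3; have d0 : 0 < d by rewrite divr_gt0 // mdist_gt0; exact/eqP.
have far x y : ball a d x -> ball b d y -> d <= mdist x y.
  rewrite !ballEmdist /= => ax yb.
  have := metric_triangle a x b; have := metric_triangle x y b.
  rewrite [mdist y b]metric_sym /d in ax yb *; lra.
apply: (@lt_le_trans _ _ d%:E); first by rewrite lte_fin.
apply: limn_esup_ge => N.
have [k [k0 Nk Ak Bk] lk] : exists2 k, [/\ (0 < k)%N, (N <= p k)%N,
    A k `<=` ball a d & B k `<=` ball b d] & logn 2 k = n0.+1.
  by apply: near_logn2; near=> k; split; near: k;
    [|exact: p_unbounded|exact: A_shrinks|exact: B_shrinks].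
exists (p k) => //; have := xs_follows s _ k0; have := xs_follows t _ k0.
rewrite /code lk; case: (s n0) (t n0) sn0 => -[] // _ => [/Bk + /Ak|/Ak + /Bk].
  by move=> near_t near_s; exact: far.
by move=> near_t near_s; rewrite metric_sym; exact: far.
Unshelve. all: by end_near.
Qed.

Lemma coded_orbits_LiYorke_pair s t : s <> t -> LiYorke_pair g (xs s) (xs t).
Proof.
by move=> neq_st; split; [exact: coded_orbits_liminf | exact: coded_orbits_limsup].
Qed.

End coded_orbits.

Theorem mainTheorem6 (R : realType) (X : metricType R)
  (f : nat -> X -> X) (p : nat -> nat) (A B : nat -> set X) (a b : X) :
  compact [set: X] ->
  (forall n, (0 < n)%N -> continuous (f n)) ->
  (forall k, (0 < k)%N -> (0 < p k)%N) ->
  (forall i, compact (A i)) -> (forall i, compact (B i)) ->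
  (forall i, A i.+1 `<=` A i) -> (forall i, B i.+1 `<=` B i) ->
  \bigcap_i A i = [set a] -> \bigcap_i B i = [set b] ->
  a <> b ->
  (forall c : nat -> bool, exists x : X,
     forall k, (0 < k)%N -> (if c k then A k else B k) (comp_iter f (p k) x)) ->
  LiYorke_chaotic f.
Proof.
move=> cX _ _ cA cB dA dB capA capB neq_ab HC.
have closedA i : closed (A i) := compact_closed (@metric_hausdorff _ X) (cA i).
have closedB i : closed (B i) := compact_closed (@metric_hausdorff _ X) (cB i).
have disjAB : \bigcap_i A i `&` \bigcap_i B i = set0.
  by rewrite capA capB set1I ifF //; apply/negP; rewrite inE; exact: neq_ab.
have [xs xs_follows] := choice (fun s => HC (code s)).
apply: (@LiYorke_chaotic_bool_seq _ _ f xs) => s t neq_st.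
apply: (@coded_orbits_LiYorke_pair _ _ _ p A B a b xs) => //.
- exact: itinerary_times_unbounded dA dB disjAB HC.
- exact: near_subset_ball_bigcap.
- exact: near_subset_ball_bigcap.
Qed.
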